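(* Let $L$ be a library, $\Lambda$ a set of pairwise compatible libraries with $L\notin\Lambda$, and $I$ an implementation of $L$ that is well defined for $L$ using $\Lambda$. Let $\vec{p}=\langle p_1,\dots,p_T\rangle$ be a concurrent program all of whose method calls are to methods of libraries in $\Lambda\uplus\{L\}$. If $(\vec v,G)\in[\![\langle\!\langle \vec p\rangle\!\rangle_I]\!]$, then there exist a plain execution $G'$ and a function $f$ such that $(\vec v,G')\in[\![\vec p]\!]$ and $f$ is a wide abstraction of $G$ to $G'$ (with respect to $L$ and $I$).
   Context: Fix a set $\mathsf{Val}$ of values, a subset $\mathsf{Loc}\subseteq\mathsf{Val}$ of locations, a set $\mathsf{Method}$ of methods, a finite set of threads $\mathsf{Tid}=\{1,\dots,T\}$, and $\mathsf{EventId}=\mathbb N$. Programs. Sequential programs are given by the grammar $p::= v \mid m(v_1,\dots,v_k)\mid \mathtt{let}\ p\ \mathsf f\mid \mathtt{loop}\ p\mid \mathtt{break}_k\ v$, where $v,v_i\in\mathsf{Val}$, $m\in\mathsf{Method}$, $\mathsf f:\mathsf{Val}\to\mathsf{SeqProg}$, and $k\in\mathbb N^{+}$. A concurrent program is a tuple $\vec p=\langle p_1,\dots,p_T\rangle$ of sequential programs, $p_t$ run by thread $t$. Events and plain executions. Labels are $\mathsf{Lab}=\mathsf{Method}\times\mathsf{Val}^*\times\mathsf{Val}$ (method, inputs, output); events are $\mathsf{Event}=\mathsf{Tid}\times\mathsf{EventId}\times\mathsf{Lab}$; for $e=\langle t,\iota,l\rangle$, $\mathrm{thread}(e)=t$.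 A plain execution is a pair $\langle E,po\rangle$ with $E\subseteq\mathsf{Event}$, $po\subseteq E\times E$, $po=\bigcup_{t}po|_t$, where $po|_t$ (restriction to events of thread $t$) is a strict total order on the events of $t$. Write $\emptyset_G=\langle\emptyset,\emptyset\rangle$ and $\{e\}_G=\langle\{e\},\emptyset\rangle$. For $G_i=\langle E_i,po_i\rangle$ with $E_1\cap E_2=\emptyset$: $G_1;G_2=\langle E_1\cup E_2,\,po_1\cup po_2\cup(E_1\times E_2)\rangle$ and $G_1\parallel G_2=\langle E_1\cup E_2,\,po_1\cup po_2\rangle$. Plain semantics. $[\![p]\!]_t$ is a set of pairs $\langle\langle v,k\rangle,G\rangle$ (output value $v$, break number $k\in\mathbb N$, plain execution $G$): $[\![v]\!]_t=\{\langle\langle v,0\rangle,\emptyset_G\rangle\}$; $[\![\mathtt{break}_k\,v]\!]_t=\{\langle\langle v,k\rangle,\emptyset_G\rangle\}$; $[\![m(\vec v)]\!]_t=\{\langle\langle v',0\rangle,\{\langle t,\iota,\langle m,\vec v,v'\rangle\rangle\}_G\rangle : v'\in\mathsf{Val},\iota\in\mathsf{EventId}\}$; $[\![\mathtt{let}\ p\ \mathsf f]\!]_t=\{\langle r,G_1;G_2\rangle:\langle\langle v,0\rangle,G_1\rangle\in[\![p]\!]_t,\ \langle r,G_2\rangle\in[\![\mathsf f\,v]\!]_t\}\cup\{\langle\langle v,k\rangle,G_1\rangle\in[\![p]\!]_t: k\neq0\}$; $[\![\mathtt{loop}\ p]\!]_t=\bigcup_{j\in\mathbb N}\{\langle\langle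 v,k\rangle,G_0;\dots;G_j\rangle : (\forall i<j.\ \langle\langle\_,0\rangle,G_i\rangle\in[\![p]\!]_t)\wedge\langle\langle v,k+1\rangle,G_j\rangle\in[\![p]\!]_t\}$ (compositions taken only when event sets are disjoint). For concurrent programs, $[\![\langle p_1,\dots,p_T\rangle]\!]=\{\langle\langle v_1,\dots,v_T\rangle,\parallel_{t}G_t\rangle:\forall t.\ \langle\langle v_t,0\rangle,G_t\rangle\in[\![p_t]\!]_t\}$. Stamps and executions. Fix a set $\mathsf{Stamp}$ and a relation $to\subseteq\mathsf{Stamp}\times\mathsf{Stamp}$. An execution is $\langle E,po,stmp,so,hb\rangle$ where $\langle E,po\rangle$ is a plain execution, $stmp$ maps each event of $E$ to a nonempty set of stamps, inducing subevents $\mathsf{SEvent}=\{\langle e,a\rangle: e\in E, a\in stmp(e)\}$, and $so,hb\subseteq\mathsf{SEvent}\times\mathsf{SEvent}$. Its preserved program order is $ppo=\{\langle\langle e_1,a_1\rangle,\langle e_2,a_2\rangle\rangle:\langle e_1,e_2\rangle\in po,\ a_i\in stmp(e_i),\ \langle a_1,a_2\rangle\in to\}$. Libraries. A library is a triple $L=\langle M,\mathsf{loc},\mathcal C\rangle$: $M\subseteq\mathsf{Method}$; $\mathsf{loc}$ maps each event whose method lies in $M$ to a set of locations; $\mathcal C$ is a set of executions satisfying (monotonicity) if $\langle E,po,stmp,so,hb\rangle\in\mathcal C$ and $(ppo\cup so)^+\subseteq hb'\subseteq hb$ then $\langle E,po,stmp,so,hb'\rangle\in\mathcal C$, and (decomposability)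 if $\langle E_1\uplus E_2,po,stmp,so,hb\rangle\in\mathcal C$ and $\mathsf{loc}(E_1)\cap\mathsf{loc}(E_2)=\emptyset$ then its restriction to $E_1$ (restricting $po$, $stmp$, and $so,hb$ to subevents of events in $E_1$) is in $\mathcal C$. For a set $E$ of events, $E|_L$ is the set of events of $E$ whose method is in $L.M$. Two libraries are compatible if their method sets are disjoint. Implementations. An implementation of $L$ is a function $I:\mathsf{Tid}\times L.M\times\mathsf{Val}^*\to\mathsf{SeqProg}$. It is well defined for $L$ using $\Lambda$ if $L\notin\Lambda$ and for all $t,m,\vec v$: $I(t,m,\vec v)$ only calls methods of libraries in $\Lambda$; no element of $[\![I(t,m,\vec v)]\!]_t$ has the form $\langle\langle\_,k+1\rangle,\_\rangle$; and if $\langle\langle v,0\rangle,\langle E,po\rangle\rangle\in[\![I(t,m,\vec v)]\!]_t$ then $E\neq\emptyset$. The translation $\langle\!\langle\cdot\rangle\!\rangle$ replaces, in thread $t$, each call $m(\vec v)$ with $m\in L.M$ by $I(t,m,\vec v)$ and leaves everything else unchanged: $\langle\!\langle v\rangle\!\rangle_t=v$, $\langle\!\langle\mathtt{break}_k v\rangle\!\rangle_t=\mathtt{break}_k v$, $\langle\!\langle\mathtt{loop}\,p\rangle\!\rangle_t=\mathtt{loop}\,\langle\!\langle p\rangle\!\rangle_t$, $\langle\!\langle\mathtt{let}\,p\,\mathsf f\rangle\!\rangle_t=\mathtt{let}\,\langle\!\langle p\rangle\!\rangle_t\,(\lambda v.\langle\!\langle\mathsf f\,v\rangle\!\rangle_t)$,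 and $\langle\!\langle\langle p_1,\dots,p_T\rangle\rangle\!\rangle_I=\langle\langle\!\langle p_1\rangle\!\rangle_1,\dots,\langle\!\langle p_T\rangle\!\rangle_T\rangle$. Wide abstraction. For plain executions $G=\langle E,po\rangle$ (using methods of $\Lambda$) and $G'=\langle E',po'\rangle$ (using methods of $\Lambda\uplus\{L\}$), a function $f:E\to E'$ is a wide abstraction of $G$ to $G'$ if: $f$ is surjective; $E|_L=\emptyset$; for every $x\in E$, if $f(x)$ is not an event of $L$ then $f(x)=x$; $f(po)\subseteq(po')^*$ (where $f(r)=\{\langle f(x),f(y)\rangle:\langle x,y\rangle\in r\}$ and $^*$ is reflexive-transitive closure); for all $e_1,e_2\in E$, $\langle f(e_1),f(e_2)\rangle\in po'$ implies $\langle e_1,e_2\rangle\in po$; and for every $e'=\langle t,\iota,\langle m,\vec v,v'\rangle\rangle\in E'$ with $m\in L.M$, $\langle\langle v',0\rangle,G|_{f^{-1}(e')}\rangle\in[\![I(t,m,\vec v)]\!]_t$, where $G|_A=\langle A,po\cap(A\times A)\rangle$. *)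

From Stdlib Require Import List Relations Arith.
Import ListNotations.
Set Implicit Arguments.

Section Defs.

Context (Val Method Stamp : Type) (Loc : Val -> Prop) (to : Stamp -> Stamp -> Prop).

(* Threads are natural numbers; the threads of a program with T threads are 1..T.
   EventId = nat. *)
Definition Tid := nat.
Definition EventId := nat.
Definition Lab : Type := (Method * list Val * Val)%type.
Definition Event : Type := (Tid * EventId * Lab)%type.

Definition ev_thread (e : Event) : Tid := fst (fst e).
Definition ev_method (e : Event) : Method := fst (fst (snd e)).

Inductive SeqProg : Type :=
| PVal : Val -> SeqProg
| PCall : Method -> list Val -> SeqProg
| PLet : SeqProg -> (Val -> SeqProg) -> SeqProg
| PLoop : SeqProg -> SeqProg
| PBreak : nat -> Val -> SeqProg.   (* break_k v, with k >= 1 required, see wf below *)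

Fixpoint breaks_pos (p : SeqProg) : Prop :=
  match p with
  | PVal _ => True
  | PCall _ _ => True
  | PLet q f => breaks_pos q /\ forall v, breaks_pos (f v)
  | PLoop q => breaks_pos q
  | PBreak k _ => 0 < k
  end.

Fixpoint calls_only (P : Method -> Prop) (p : SeqProg) : Prop :=
  match p with
  | PVal _ => True
  | PCall m _ => P m
  | PLet q f => calls_only P q /\ forall v, calls_only P (f v)
  | PLoop q => calls_only P q
  | PBreak _ _ => True
  end.

Record PlainExec : Type := mkPlain { pE : Event -> Prop; ppo : Event -> Event -> Prop }.

Definition is_plain (G : PlainExec) : Prop :=
  (forall e1 e2, ppo G e1 e2 -> pE G e1 /\ pE G e2 /\ ev_thread e1 = ev_thread e2) /\
  (forall e, ~ ppo G e e) /\
  (forall e1 e2 e3, ppo G e1 e2 -> ppo G e2 e3 -> ppo G e1 e3) /\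
  (forall e1 e2, pE G e1 -> pE G e2 -> ev_thread e1 = ev_thread e2 ->
      e1 = e2 \/ ppo G e1 e2 \/ ppo G e2 e1).

Definition empty_G : PlainExec := mkPlain (fun _ => False) (fun _ _ => False).
Definition single_G (e : Event) : PlainExec := mkPlain (fun x => x = e) (fun _ _ => False).

Definition disjointG (G1 G2 : PlainExec) : Prop :=
  forall e, pE G1 e -> pE G2 e -> False.

Definition seqG (G1 G2 : PlainExec) : PlainExec :=
  mkPlain (fun e => pE G1 e \/ pE G2 e)
          (fun x y => ppo G1 x y \/ ppo G2 x y \/ (pE G1 x /\ pE G2 y)).

Fixpoint seqn (Gs : nat -> PlainExec) (j : nat) : PlainExec :=
  match j with
  | 0 => Gs 0
  | S j' => seqG (seqn Gs j') (Gs (S j'))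
  end.

Fixpoint sem (t : Tid) (p : SeqProg) (r : Val * nat) (G : PlainExec) : Prop :=
  match p with
  | PVal v => r = (v, 0) /\ G = empty_G
  | PBreak k v => r = (v, k) /\ G = empty_G
  | PCall m vs => exists (v' : Val) (iota : EventId),
      r = (v', 0) /\ G = single_G (t, iota, (m, vs, v'))
  | PLet q f =>
      (exists v G1 G2, sem t q (v, 0) G1 /\ sem t (f v) r G2 /\
                       disjointG G1 G2 /\ G = seqG G1 G2)
      \/ (sem t q r G /\ snd r <> 0)
  | PLoop q =>
      exists (j : nat) (Gs : nat -> PlainExec),
        (forall i, i < j -> exists v0, sem t q (v0, 0) (Gs i)) /\
        sem t q (fst r, S (snd r)) (Gs j) /\
        (forall i i', i <= j -> i' <= j -> i <> i' -> disjointG (Gs i) (Gs i')) /\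
        G = seqn Gs j
  end.

Definition in_threads (T : nat) (t : Tid) : Prop := 1 <= t <= T.

Definition csem (T : nat) (ps : Tid -> SeqProg) (vs : Tid -> Val) (G : PlainExec) : Prop :=
  exists Gs : Tid -> PlainExec,
    (forall t, in_threads T t -> sem t (ps t) (vs t, 0) (Gs t)) /\
    (forall t t', in_threads T t -> in_threads T t' -> t <> t' -> disjointG (Gs t) (Gs t')) /\
    G = mkPlain (fun e => exists t, in_threads T t /\ pE (Gs t) e)
                (fun x y => exists t, in_threads T t /\ ppo (Gs t) x y).

Definition SEvent : Type := (Event * Stamp)%type.

Record Execution : Type := mkExec {
  xE : Event -> Prop;
  xpo : Event -> Event -> Prop;
  xstmp : Event -> Stamp -> Prop;
  xso : SEvent -> SEvent -> Prop;
  xhb : SEvent -> SEvent -> Prop }.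

Definition is_execution (X : Execution) : Prop :=
  is_plain (mkPlain (xE X) (xpo X)) /\
  (forall e, xE X e -> exists a, xstmp X e a) /\
  (forall x y, xso X x y \/ xhb X x y ->
     (xE X (fst x) /\ xstmp X (fst x) (snd x)) /\ (xE X (fst y) /\ xstmp X (fst y) (snd y))).

Definition xppo (X : Execution) (x y : SEvent) : Prop :=
  xpo X (fst x) (fst y) /\ xstmp X (fst x) (snd x) /\ xstmp X (fst y) (snd y) /\
  to (snd x) (snd y).

Definition restrict_exec (X : Execution) (E1 : Event -> Prop) : Execution :=
  mkExec (fun e => xE X e /\ E1 e)
         (fun x y => xpo X x y /\ E1 x /\ E1 y)
         (fun e a => xstmp X e a /\ E1 e)
         (fun x y => xso X x y /\ E1 (fst x) /\ E1 (fst y))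
         (fun x y => xhb X x y /\ E1 (fst x) /\ E1 (fst y)).

Record Library : Type := mkLib {
  lib_M : Method -> bool;
  lib_loc : Event -> Val -> Prop;
  lib_C : Execution -> Prop;
  lib_loc_sub : forall e x, lib_M (ev_method e) = true -> lib_loc e x -> Loc x;
  lib_C_exec : forall X, lib_C X -> is_execution X;
  lib_mono : forall X hb',
      lib_C X ->
      (forall x y, clos_trans _ (fun a b => xppo X a b \/ xso X a b) x y -> hb' x y) ->
      (forall x y, hb' x y -> xhb X x y) ->
      lib_C (mkExec (xE X) (xpo X) (xstmp X) (xso X) hb');
  lib_decomp : forall X (E1 E2 : Event -> Prop),
      lib_C X ->
      (forall e, xE X e <-> (E1 e \/ E2 e)) ->
      (forall e, E1 e -> E2 e -> False) ->
      (forall x, (exists e, E1 e /\ lib_loc e x) -> (exists e, E2 e /\ lib_loc e x) -> False) ->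
      lib_C (restrict_exec X E1) }.

Definition compatible (L1 L2 : Library) : Prop :=
  forall m, lib_M L1 m = true -> lib_M L2 m = true -> False.

Definition methods_of (Lam : Library -> Prop) (m : Method) : Prop :=
  exists L', Lam L' /\ lib_M L' m = true.

Definition Implementation : Type := Tid -> Method -> list Val -> SeqProg.

Definition well_defined_impl (T : nat) (L : Library) (Lam : Library -> Prop)
    (I : Implementation) : Prop :=
  ~ Lam L /\
  forall t m vs, in_threads T t -> lib_M L m = true ->
    calls_only (methods_of Lam) (I t m vs) /\
    (forall v k G, ~ sem t (I t m vs) (v, S k) G) /\
    (forall v G, sem t (I t m vs) (v, 0) G -> exists e, pE G e).

Fixpoint translate (L : Library) (I : Implementation) (t : Tid) (p : SeqProg) : SeqProg :=
  match p with
  | PVal v => PVal v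
  | PBreak k v => PBreak k v
  | PLoop q => PLoop (translate L I t q)
  | PLet q f => PLet (translate L I t q) (fun v => translate L I t (f v))
  | PCall m vs => if lib_M L m then I t m vs else PCall m vs
  end.

Definition translate_conc (L : Library) (I : Implementation) (ps : Tid -> SeqProg) :
  Tid -> SeqProg := fun t => translate L I t (ps t).

Definition restrictG (G : PlainExec) (A : Event -> Prop) : PlainExec :=
  mkPlain (fun e => pE G e /\ A e) (fun x y => ppo G x y /\ A x /\ A y).

Definition wide_abstraction (L : Library) (I : Implementation)
    (G G' : PlainExec) (f : Event -> Event) : Prop :=
  (forall x, pE G x -> pE G' (f x)) /\
  (forall e', pE G' e' -> exists x, pE G x /\ f x = e') /\
  (forall x, pE G x -> lib_M L (ev_method x) = false) /\
  (forall x, pE G x -> lib_M L (ev_method (f x)) = false -> f x = x) /\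
  (forall x y, ppo G x y -> clos_refl_trans _ (ppo G') (f x) (f y)) /\
  (forall e1 e2, pE G e1 -> pE G e2 -> ppo G' (f e1) (f e2) -> ppo G e1 e2) /\
  (forall t iota m vs v', pE G' (t, iota, (m, vs, v')) -> lib_M L m = true ->
     sem t (I t m vs) (v', 0)
         (restrictG G (fun x => pE G x /\ f x = (t, iota, (m, vs, v'))))).

End Defs.

From Stdlib Require Import Relations Arith Lia Cantor.
From Stdlib Require Import ClassicalEpsilon FunctionalExtensionality PropExtensionality.

(* By induction on the program, an execution of the translated thread is cut into the
   executions of the inlined method bodies, each collapsed into one abstract event of L,
   and the remaining events, which are kept.  Sequencing and loops glue these abstractions
   piecewise; the only subtlety is that the abstract events must be pairwise distinct, so
   each subprogram draws their identifiers from its own injective supply, obtained by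
   Cantor-pairing the parent supply with the position of the subprogram.  Threads are
   finally abstracted independently, since every event stays on its own thread. *)

Lemma clos_refl_trans_mono (A : Type) (R R' : relation A) x y :
  (forall a b, R a b -> R' a b) -> clos_refl_trans A R x y -> clos_refl_trans A R' x y.
Proof.
  intros HR Hxy; induction Hxy; [apply rt_step; auto | apply rt_refl | eapply rt_trans; eauto].
Qed.

Lemma choice_on (X A : Type) (D : X -> Prop) (P : X -> A -> Prop) (a0 : A) :
  (forall x, D x -> exists a, P x a) -> exists F : X -> A, forall x, D x -> P x (F x).
Proof.
  intro HP.
  assert (Hall : forall x, exists a, D x -> P x a).
  { intro x; destruct (excluded_middle_informative (D x)) as [Hx|Hx].
    - destruct (HP x Hx) as [a Ha]; eauto.
    - exists a0; tauto. }
  exact (choice _ Hall).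
Qed.

Section PlainExecutions.
Context {Val Method : Type}.
Notation Ev := (Event Val Method).
Notation PE := (PlainExec Val Method).

Lemma PlainExec_ext (G1 G2 : PE) :
  (forall e, pE G1 e <-> pE G2 e) -> (forall x y, ppo G1 x y <-> ppo G2 x y) -> G1 = G2.
Proof.
  destruct G1 as [E1 po1], G2 as [E2 po2]; simpl; intros HE Hpo.
  replace E2 with E1
    by (apply functional_extensionality; intro; apply propositional_extensionality; auto).
  replace po2 with po1
    by (do 2 (apply functional_extensionality; intro); apply propositional_extensionality; auto).
  reflexivity.
Qed.

Definition po_closed (G : PE) : Prop := forall x y, ppo G x y -> pE G x /\ pE G y.

Lemma po_closed_seqG G1 G2 : po_closed G1 -> po_closed G2 -> po_closed (seqG G1 G2).
Proof.
  intros H1 H2 x y [Hxy|[Hxy|Hxy]]; simpl.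
  - destruct (H1 _ _ Hxy); tauto.
  - destruct (H2 _ _ Hxy); tauto.
  - tauto.
Qed.

Lemma in_seqn (Gs : nat -> PE) j e : pE (seqn Gs j) e <-> exists i, i <= j /\ pE (Gs i) e.
Proof.
  induction j as [|j IH]; simpl.
  - split; [eauto | intros [i [Hi He]]; replace i with 0 in He by lia; exact He].
  - rewrite IH; split.
    + intros [[i [Hi He]]|He]; [exists i; split; [lia | exact He] | eauto].
    + intros [i [Hi He]]; destruct (Nat.eq_dec i (S j)) as [->|Hne]; [right; exact He|].
      left; exists i; split; [lia | exact He].
Qed.

Lemma po_closed_seqn (Gs : nat -> PE) j :
  (forall i, i <= j -> po_closed (Gs i)) -> po_closed (seqn Gs j).
Proof.
  induction j as [|j IH]; intro H; simpl; [auto|].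
  apply po_closed_seqG; [apply IH; intros; apply H|apply H]; lia.
Qed.

Section SeqOrder.
Variables (G1 G2 : PE).
Hypotheses (HG1 : po_closed G1) (HG2 : po_closed G2) (HD : disjointG G1 G2).

Lemma seqG_po_left x y : pE G1 x -> pE G1 y -> ppo (seqG G1 G2) x y <-> ppo G1 x y.
Proof.
  intros Hx Hy; simpl; split; [|tauto].
  intros [H|[H|[_ H]]]; [exact H | |]; exfalso.
  - apply (HD x Hx), (HG2 _ _ H).
  - exact (HD y Hy H).
Qed.

Lemma seqG_po_right x y : pE G2 x -> pE G2 y -> ppo (seqG G1 G2) x y <-> ppo G2 x y.
Proof.
  intros Hx Hy; simpl; split; [|tauto].
  intros [H|[H|[H _]]]; [| exact H |]; exfalso.
  - exact (HD x (proj1 (HG1 _ _ H)) Hx).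
  - exact (HD x H Hx).
Qed.

Lemma seqG_po_not_backward x y : pE G2 x -> pE G1 y -> ~ ppo (seqG G1 G2) x y.
Proof.
  intros Hx Hy [H|[H|[H _]]].
  - exact (HD x (proj1 (HG1 _ _ H)) Hx).
  - exact (HD y Hy (proj2 (HG2 _ _ H))).
  - exact (HD x H Hx).
Qed.

End SeqOrder.

Lemma restrictG_all (G : PE) (P : Ev -> Prop) :
  po_closed G -> (forall x, pE G x -> P x) -> restrictG G (fun x => pE G x /\ P x) = G.
Proof.
  intros HG HP; apply PlainExec_ext; simpl.
  - intro x; split; [tauto | auto].
  - intros x y; split; [tauto|]; intro H; destruct (HG _ _ H); auto.
Qed.

Lemma restrictG_part (G G1 : PE) (P P1 : Ev -> Prop) :
  (forall x, pE G x -> P x -> pE G1 x) ->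
  (forall x, pE G1 x -> pE G x /\ (P x <-> P1 x)) ->
  (forall x y, pE G1 x -> pE G1 y -> ppo G x y <-> ppo G1 x y) ->
  restrictG G (fun x => pE G x /\ P x) = restrictG G1 (fun x => pE G1 x /\ P1 x).
Proof.
  intros Hin Hsub Hpo; apply PlainExec_ext; simpl.
  - intro x; split.
    + intros [_ [Hx HPx]]; pose proof (Hin x Hx HPx) as H1; specialize (Hsub x H1); tauto.
    + intros [_ [H1 HP1]]; specialize (Hsub x H1); tauto.
  - intros x y; split.
    + intros [Hxy [[Hx HPx] [Hy HPy]]].
      pose proof (Hin x Hx HPx) as H1x; pose proof (Hin y Hy HPy) as H1y.
      pose proof (Hsub x H1x); pose proof (Hsub y H1y).
      rewrite <- Hpo by assumption; tauto.
    + intros [Hxy [[H1x HPx] [H1y HPy]]].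
      pose proof (Hsub x H1x); pose proof (Hsub y H1y).
      rewrite Hpo by assumption; tauto.
Qed.

Definition parG (T : nat) (Gs : Tid -> PE) : PE :=
  mkPlain (fun e => exists t, in_threads T t /\ pE (Gs t) e)
          (fun x y => exists t, in_threads T t /\ ppo (Gs t) x y).

Section Threads.
Variables (T : nat) (Gs : Tid -> PE).
Hypothesis Hthread : forall t e, in_threads T t -> pE (Gs t) e -> ev_thread e = t.
Hypothesis Hclosed : forall t, in_threads T t -> po_closed (Gs t).

Lemma in_parG e : pE (parG T Gs) e <-> in_threads T (ev_thread e) /\ pE (Gs (ev_thread e)) e.
Proof.
  simpl; split; [intros [t [Ht He]]; rewrite (Hthread t e Ht He); auto | eauto].
Qed.

Lemma parG_po x y :
  ppo (parG T Gs) x y <-> in_threads T (ev_thread x) /\ ppo (Gs (ev_thread x)) x y.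
Proof.
  simpl; split; [|eauto].
  intros [t [Ht Hxy]]; rewrite (Hthread t x Ht (proj1 (Hclosed t Ht _ _ Hxy))); auto.
Qed.

End Threads.

Lemma sem_loop_inv t q r (G : PE) : sem t (PLoop q) r G ->
  exists j Gs, (forall i, i <= j -> exists r', sem t q r' (Gs i)) /\ G = seqn Gs j.
Proof.
  intros [j [Gs [Hlt [Hj [_ ->]]]]]; exists j, Gs; split; [|reflexivity].
  intros i Hi; destruct (Nat.eq_dec i j) as [->|Hne]; [eauto|].
  destruct (Hlt i ltac:(lia)); eauto.
Qed.

Lemma sem_po_closed t p : forall r (G : PE), sem t p r G -> po_closed G.
Proof.
  induction p as [v|m l|q IHq g IHg|q IHq|k v]; intros r G H.
  - destruct H as [_ ->]; intros ? ? [].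
  - destruct H as [? [? [_ ->]]]; intros ? ? [].
  - destruct H as [[v [G1 [G2 [H1 [H2 [_ ->]]]]]] | [H _]]; [apply po_closed_seqG|]; eauto.
  - apply sem_loop_inv in H as [j [Gs [Hit ->]]].
    apply po_closed_seqn; intros i Hi; destruct (Hit i Hi); eauto.
  - destruct H as [_ ->]; intros ? ? [].
Qed.

Lemma sem_event_thread t p : forall r (G : PE) e, sem t p r G -> pE G e -> ev_thread e = t.
Proof.
  induction p as [v|m l|q IHq g IHg|q IHq|k v]; intros r G e H He.
  - destruct H as [_ ->]; destruct He.
  - destruct H as [? [? [_ ->]]]; simpl in He; subst e; reflexivity.
  - destruct H as [[v [G1 [G2 [H1 [H2 [_ ->]]]]]] | [H _]]; [destruct He|]; eauto.
  - apply sem_loop_inv in H as [j [Gs [Hit ->]]].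
    apply in_seqn in He as [i [Hi He]]; destruct (Hit i Hi); eauto.
  - destruct H as [_ ->]; destruct He.
Qed.

Lemma sem_event_method (P : Method -> Prop) t p : calls_only P p ->
  forall r (G : PE) e, sem t p r G -> pE G e -> P (ev_method e).
Proof.
  induction p as [v|m l|q IHq g IHg|q IHq|k v]; simpl; intros Hp r G e H He.
  - destruct H as [_ ->]; destruct He.
  - destruct H as [? [? [_ ->]]]; simpl in He; subst e; exact Hp.
  - destruct Hp as [Hq Hg].
    destruct H as [[v [G1 [G2 [H1 [H2 [_ ->]]]]]] | [H _]]; [destruct He|]; eauto.
  - apply sem_loop_inv in H as [j [Gs [Hit ->]]].
    apply in_seqn in He as [i [Hi He]]; destruct (Hit i Hi); eauto.
  - destruct H as [_ ->]; destruct He.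
Qed.

Lemma disjointG_seqn (Gs : nat -> PE) j (G : PE) :
  (forall i, i <= j -> disjointG (Gs i) G) -> disjointG (seqn Gs j) G.
Proof. intros H e He; apply in_seqn in He as [i [Hi He]]; exact (H i Hi e He). Qed.

Definition glue (G1 : PE) (f1 f2 : Ev -> Ev) (x : Ev) : Ev :=
  if excluded_middle_informative (pE G1 x) then f1 x else f2 x.

Lemma glue_left G1 f1 f2 x : pE G1 x -> glue G1 f1 f2 x = f1 x.
Proof. unfold glue; destruct excluded_middle_informative; tauto. Qed.

Lemma glue_right {G1 G2 : PE} {f1 f2 x} : disjointG G1 G2 -> pE G2 x -> glue G1 f1 f2 x = f2 x.
Proof. unfold glue; destruct excluded_middle_informative; [intros HD ? ; exfalso|]; eauto. Qed.

Fixpoint glue_seqn (Gs : nat -> PE) (fs : nat -> Ev -> Ev) (j : nat) : Ev -> Ev :=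
  match j with
  | 0 => fs 0
  | S j' => glue (seqn Gs j') (glue_seqn Gs fs j') (fs (S j'))
  end.

End PlainExecutions.

Definition id_range (ns : nat -> nat) (n : nat) : Prop := exists k, n = ns k.

Definition sub_ns (ns : nat -> nat) (i : nat) : nat -> nat := fun k => ns (Cantor.to_nat (i, k)).

Lemma Cantor_to_nat_inj p q : Cantor.to_nat p = Cantor.to_nat q -> p = q.
Proof. intro E; rewrite <- (cancel_of_to p), <- (cancel_of_to q), E; reflexivity. Qed.

Section Namespaces.
Variable ns : nat -> nat.
Hypothesis ns_inj : forall a b, ns a = ns b -> a = b.

Lemma sub_ns_inj i a b : sub_ns ns i a = sub_ns ns i b -> a = b.
Proof. unfold sub_ns; intro E; apply ns_inj, Cantor_to_nat_inj in E; now injection E. Qed.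

Lemma sub_ns_disjoint i i' n :
  i <> i' -> id_range (sub_ns ns i) n -> id_range (sub_ns ns i') n -> False.
Proof.
  intros Hne [a ->] [b E]; apply ns_inj, Cantor_to_nat_inj in E; injection E; auto.
Qed.

End Namespaces.

Lemma id_range_sub_ns ns i n : id_range (sub_ns ns i) n -> id_range ns n.
Proof. intros [k ->]; eexists; reflexivity. Qed.

Section Abstraction.
Context {Val Method Stamp : Type} {Loc : Val -> Prop} {to : Stamp -> Stamp -> Prop}.
Context (L : @Library Val Method Stamp Loc to) (I : Implementation Val Method).
Notation Ev := (Event Val Method).
Notation PE := (PlainExec Val Method).

Definition ev_id (e : Ev) : EventId := snd (fst e).

Definition abstracts_within (ids : nat -> Prop) (G G' : PE) (f : Ev -> Ev) : Prop :=
  wide_abstraction L I G G' f /\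
  forall e', pE G' e' -> lib_M L (ev_method e') = true -> ids (ev_id e').

Lemma abstracts_within_weaken (ids ids' : nat -> Prop) G G' f :
  (forall n, ids n -> ids' n) -> abstracts_within ids G G' f -> abstracts_within ids' G G' f.
Proof. intros Hids [HA Hin]; split; auto. Qed.

Lemma abstracts_within_id ids (G : PE) :
  po_closed G -> (forall x, pE G x -> lib_M L (ev_method x) = false) ->
  abstracts_within ids G G (fun x => x).
Proof.
  intros HG Hnonlib; repeat split; auto.
  - intros e' He; exists e'; auto.
  - intros; apply rt_step; auto.
  - intros t iota m vs v' He Hm; specialize (Hnonlib _ He).
    change (lib_M L m = false) in Hnonlib; congruence.
  - intros e' He Hm; rewrite Hnonlib in Hm; [discriminate | exact He].
Qed.

Lemma wide_abstraction_non_library G G' f e :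
  wide_abstraction L I G G' f -> pE G' e -> lib_M L (ev_method e) = false -> pE G e.
Proof.
  intros [_ [Honto [_ [Hfix _]]]] He Hm.
  destruct (Honto _ He) as [x [Hx <-]]; rewrite Hfix; auto.
Qed.

Lemma abstracts_within_disjoint ids1 ids2 G1 G2 G1' G2' f1 f2 :
  disjointG G1 G2 -> (forall n, ids1 n -> ids2 n -> False) ->
  abstracts_within ids1 G1 G1' f1 -> abstracts_within ids2 G2 G2' f2 -> disjointG G1' G2'.
Proof.
  intros HD Hids [HA1 Hin1] [HA2 Hin2] e He1 He2.
  destruct (lib_M L (ev_method e)) eqn:Hm.
  - exact (Hids _ (Hin1 e He1 Hm) (Hin2 e He2 Hm)).
  - apply (HD e); eapply wide_abstraction_non_library; eauto.
Qed.

Section SeqAbstraction.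
Variables (ids1 ids2 : nat -> Prop) (G1 G2 G1' G2' : PE) (f1 f2 : Ev -> Ev).
Hypotheses (HG1 : po_closed G1) (HG2 : po_closed G2).
Hypotheses (HG1' : po_closed G1') (HG2' : po_closed G2').
Hypotheses (HD : disjointG G1 G2) (HD' : disjointG G1' G2').
Hypotheses (HA1 : abstracts_within ids1 G1 G1' f1) (HA2 : abstracts_within ids2 G2 G2' f2).

Lemma glue_seqG_po x y :
  ppo (seqG G1 G2) x y ->
  clos_refl_trans _ (ppo (seqG G1' G2')) (glue G1 f1 f2 x) (glue G1 f1 f2 y).
Proof.
  destruct HA1 as [[Hmaps1 [_ [_ [_ [Hpo1 _]]]]] _], HA2 as [[Hmaps2 [_ [_ [_ [Hpo2 _]]]]] _].
  intros [H|[H|[Hx Hy]]].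
  - destruct (HG1 _ _ H); rewrite !glue_left by assumption.
    apply clos_refl_trans_mono with (ppo G1'); [simpl; tauto | auto].
  - destruct (HG2 _ _ H); rewrite !(glue_right HD) by assumption.
    apply clos_refl_trans_mono with (ppo G2'); [simpl; tauto | auto].
  - rewrite glue_left, (glue_right HD) by assumption.
    apply rt_step; right; right; auto.
Qed.

Lemma glue_seqG_po_reflect x y : pE (seqG G1 G2) x -> pE (seqG G1 G2) y ->
  ppo (seqG G1' G2') (glue G1 f1 f2 x) (glue G1 f1 f2 y) -> ppo (seqG G1 G2) x y.
Proof.
  destruct HA1 as [[Hmaps1 [_ [_ [_ [_ [Hrefl1 _]]]]]] _].
  destruct HA2 as [[Hmaps2 [_ [_ [_ [_ [Hrefl2 _]]]]]] _].
  intros [Hx|Hx] [Hy|Hy] H.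
  - rewrite !glue_left in H by assumption.
    apply seqG_po_left in H; auto. left; auto.
  - right; right; auto.
  - rewrite (glue_right HD), glue_left in H by assumption.
    exfalso; exact (seqG_po_not_backward _ _ HG1' HG2' HD' _ _ (Hmaps2 _ Hx) (Hmaps1 _ Hy) H).
  - rewrite !(glue_right HD) in H by assumption.
    apply seqG_po_right in H; auto. right; left; auto.
Qed.

Lemma glue_seqG_restrict_left e' : pE G1' e' ->
  restrictG (seqG G1 G2) (fun x => pE (seqG G1 G2) x /\ glue G1 f1 f2 x = e') =
  restrictG G1 (fun x => pE G1 x /\ f1 x = e').
Proof.
  destruct HA2 as [[Hmaps2 _] _]; intro He.
  apply restrictG_part.
  - intros x [Hx|Hx] E; [exact Hx|]; exfalso.
    rewrite (glue_right HD) in E by assumption.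
    apply (HD' e' He); rewrite <- E; auto.
  - intros x Hx; rewrite glue_left by assumption; simpl; tauto.
  - intros; apply seqG_po_left; auto.
Qed.

Lemma glue_seqG_restrict_right e' : pE G2' e' ->
  restrictG (seqG G1 G2) (fun x => pE (seqG G1 G2) x /\ glue G1 f1 f2 x = e') =
  restrictG G2 (fun x => pE G2 x /\ f2 x = e').
Proof.
  destruct HA1 as [[Hmaps1 _] _]; intro He.
  apply restrictG_part.
  - intros x [Hx|Hx] E; [|exact Hx]; exfalso.
    rewrite glue_left in E by assumption.
    apply (HD' e'); [rewrite <- E; auto | exact He].
  - intros x Hx; rewrite (glue_right HD) by assumption; simpl; tauto.
  - intros; apply seqG_po_right; auto.
Qed.

Lemma abstracts_within_seqG :
  abstracts_within (fun n => ids1 n \/ ids2 n) (seqG G1 G2) (seqG G1' G2') (glue G1 f1 f2).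
Proof.
  pose proof HA1 as [[Hmaps1 [Honto1 [Hnl1 [Hfix1 [_ [_ Hblock1]]]]]] Hids1].
  pose proof HA2 as [[Hmaps2 [Honto2 [Hnl2 [Hfix2 [_ [_ Hblock2]]]]]] Hids2].
  split; [repeat split|].
  - intros x [Hx|Hx]; [rewrite glue_left | rewrite (glue_right HD)]; simpl; auto.
  - intros e' [He|He].
    + destruct (Honto1 _ He) as [x [Hx <-]]; exists x; rewrite glue_left; simpl; auto.
    + destruct (Honto2 _ He) as [x [Hx <-]]; exists x; rewrite (glue_right HD); simpl; auto.
  - intros x [Hx|Hx]; auto.
  - intros x [Hx|Hx]; [rewrite glue_left | rewrite (glue_right HD)]; auto.
  - exact glue_seqG_po.
  - exact glue_seqG_po_reflect.
  - intros t iota m vs v' [He|He] Hm.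
    + rewrite glue_seqG_restrict_left by assumption; auto.
    + rewrite glue_seqG_restrict_right by assumption; auto.
  - intros e' [He|He] Hm; auto.
Qed.

End SeqAbstraction.

Lemma abstracts_within_seqn (ids : nat -> nat -> Prop) (Gs Gs' : nat -> PE) fs j :
  (forall i, i <= j -> po_closed (Gs i) /\ po_closed (Gs' i) /\
                       abstracts_within (ids i) (Gs i) (Gs' i) (fs i)) ->
  (forall i i', i <= j -> i' <= j -> i <> i' ->
     disjointG (Gs i) (Gs i') /\ disjointG (Gs' i) (Gs' i')) ->
  abstracts_within (fun n => exists i, i <= j /\ ids i n)
    (seqn Gs j) (seqn Gs' j) (glue_seqn Gs fs j).
Proof.
  induction j as [|j IH]; intros Hblocks HD.
  - eapply abstracts_within_weaken; [|apply Hblocks; reflexivity].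
    intros n Hn; exists 0; auto.
  - assert (Hprefix : forall i, i <= j -> po_closed (Gs i) /\ po_closed (Gs' i))
      by (intros i Hi; destruct (Hblocks i ltac:(lia)); tauto).
    destruct (Hblocks (S j) (le_n _)) as [HGj [HGj' HAj]].
    assert (Hlast : forall i, i <= j ->
              disjointG (Gs i) (Gs (S j)) /\ disjointG (Gs' i) (Gs' (S j)))
      by (intros i Hi; apply HD; lia).
    assert (Hprefix_abs := IH ltac:(intros i Hi; apply Hblocks; lia)
                              ltac:(intros i i' Hi Hi'; apply HD; lia)).
    eapply abstracts_within_weaken;
      [| exact (abstracts_within_seqG _ _ _ _ _ _ _ _
                  (po_closed_seqn _ _ (fun i Hi => proj1 (Hprefix i Hi))) HGj
                  (po_closed_seqn _ _ (fun i Hi => proj2 (Hprefix i Hi))) HGj'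
                  (disjointG_seqn _ _ _ (fun i Hi => proj1 (Hlast i Hi)))
                  (disjointG_seqn _ _ _ (fun i Hi => proj2 (Hlast i Hi)))
                  Hprefix_abs HAj)].
    intros n [[i [Hi Hn]]|Hn]; [exists i; split; [lia | exact Hn] | exists (S j); auto].
Qed.

End Abstraction.

Section Refinement.
Context {Val Method Stamp : Type} {Loc : Val -> Prop} {to : Stamp -> Stamp -> Prop}.
Context (L : @Library Val Method Stamp Loc to) (I : Implementation Val Method).
Notation Ev := (Event Val Method).
Notation PE := (PlainExec Val Method).

Definition refines (t : Tid) (p' p : SeqProg Val Method) : Prop :=
  forall r (G : PE) (ns : nat -> nat), (forall a b, ns a = ns b -> a = b) ->
    sem t p' r G -> exists G' f, sem t p r G' /\ abstracts_within L I (id_range ns) G G' f.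

Lemma refines_refl t p :
  (forall r (G : PE) e, sem t p r G -> pE G e -> lib_M L (ev_method e) = false) -> refines t p p.
Proof.
  intros Hnonlib r G ns _ H; exists G, (fun x => x); split; [exact H|].
  apply abstracts_within_id; [eapply sem_po_closed | intros; eapply Hnonlib]; eauto.
Qed.

Lemma refines_let t q' q g' g :
  refines t q' q -> (forall v, refines t (g' v) (g v)) -> refines t (PLet q' g') (PLet q g).
Proof.
  intros Hq Hg r G ns Hns [[v [G1 [G2 [H1 [H2 [HD ->]]]]]] | [H Hr]].
  - destruct (Hq _ _ _ (sub_ns_inj ns Hns 0) H1) as [G1' [f1 [S1 A1]]].
    destruct (Hg v _ _ _ (sub_ns_inj ns Hns 1) H2) as [G2' [f2 [S2 A2]]].
    assert (HD' : disjointG G1' G2').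
    { eapply abstracts_within_disjoint; eauto; intro n; apply sub_ns_disjoint; auto. }
    exists (seqG G1' G2'), (glue G1 f1 f2); split; [left; exists v, G1', G2'; auto|].
    eapply abstracts_within_weaken;
      [| apply abstracts_within_seqG; eauto; eapply sem_po_closed; eauto].
    intros n [Hn|Hn]; eapply id_range_sub_ns; eauto.
  - destruct (Hq _ _ _ Hns H) as [G' [f [S A]]]; exists G', f; split; [right|]; auto.
Qed.

Lemma refines_loop t q' q : refines t q' q -> refines t (PLoop q') (PLoop q).
Proof.
  intros Hq r G ns Hns [j [Gs [Hlt [Hj [HD ->]]]]].
  pose (iteration i (Gf : PE * (Ev -> Ev)) :=
          (i < j -> exists v0, sem t q (v0, 0) (fst Gf)) /\
          (i = j -> sem t q (fst r, S (snd r)) (fst Gf)) /\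
          abstracts_within L I (id_range (sub_ns ns i)) (Gs i) (fst Gf) (snd Gf)).
  assert (Hex : forall i, i <= j -> exists Gf, iteration i Gf).
  { intros i Hi; destruct (Nat.eq_dec i j) as [->|Hne].
    - destruct (Hq _ _ _ (sub_ns_inj ns Hns j) Hj) as [G' [f [S A]]].
      exists (G', f); split; [intro; lia | split; [intros _; exact S | exact A]].
    - destruct (Hlt i ltac:(lia)) as [v0 Hv].
      destruct (Hq _ _ _ (sub_ns_inj ns Hns i) Hv) as [G' [f [S A]]].
      exists (G', f); split; [eauto | split; [intro; lia | exact A]]. }
  destruct (choice_on _ _ _ iteration (@empty_G Val Method, fun x => x) Hex) as [F HF].
  assert (Hclosed : forall i, i <= j -> po_closed (Gs i) /\ po_closed (fst (F i))).
  { intros i Hi; destruct (HF i Hi) as [Hlt' [Hj' _]].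
    destruct (Nat.eq_dec i j) as [->|Hne].
    - split; eapply sem_po_closed; eauto.
    - destruct (Hlt i ltac:(lia)), (Hlt' ltac:(lia)); split; eapply sem_po_closed; eauto. }
  assert (HD' : forall i i', i <= j -> i' <= j -> i <> i' -> disjointG (fst (F i)) (fst (F i'))).
  { intros i i' Hi Hi' Hne; eapply abstracts_within_disjoint;
      [apply HD | intro n; apply (sub_ns_disjoint ns Hns i i') | apply HF | apply HF]; auto. }
  exists (seqn (fun i => fst (F i)) j), (glue_seqn Gs (fun i => snd (F i)) j); split.
  - exists j, (fun i => fst (F i)); repeat split; auto.
    + intros i Hi; apply (HF i); lia.
    + apply (HF j); reflexivity.
  - apply abstracts_within_weaken with (fun n => exists i, i <= j /\ id_range (sub_ns ns i) n).
    + intros n [i [_ Hn]]; eapply id_range_sub_ns; eauto.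
    + apply (abstracts_within_seqn L I (fun i => id_range (sub_ns ns i))).
      * intros i Hi; destruct (Hclosed i Hi); split; [|split]; auto.
        exact (proj2 (proj2 (HF i Hi))).
      * intros i i' Hi Hi' Hne; split; [apply HD | apply HD']; auto.
Qed.

Section Translation.
Variables (T : nat) (Lam : @Library Val Method Stamp Loc to -> Prop).
Hypothesis HcompL : forall L1, Lam L1 -> compatible L L1.
Hypothesis Hwd : well_defined_impl T L Lam I.

Lemma methods_of_not_library m : methods_of Lam m -> lib_M L m = false.
Proof.
  intros [L' [HL' Hm]]; destruct (lib_M L m) eqn:E; [|reflexivity].
  exfalso; exact (HcompL L' HL' m E Hm).
Qed.

Lemma refines_call t m l : in_threads T t -> lib_M L m = true -> refines t (I t m l) (PCall m l).
Proof.
  intros Ht Hm [v' k] G ns _ H.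
  destruct Hwd as [_ Hw]; destruct (Hw t m l Ht Hm) as [Hcalls [Hnobreak Hnonempty]].
  destruct k as [|k]; [|exfalso; eapply Hnobreak; eauto].
  set (ev := (t, ns 0, (m, l, v')) : Ev).
  exists (single_G ev), (fun _ => ev); split; [exists v', (ns 0); split; reflexivity|].
  repeat split; simpl.
  - intros e' ->; destruct (Hnonempty _ _ H) as [x Hx]; eauto.
  - intros x Hx; apply methods_of_not_library.
    exact (sem_event_method _ _ _ Hcalls _ _ _ H Hx).
  - intros x _ E; change (lib_M L m = false) in E; congruence.
  - intros; apply rt_refl.
  - tauto.
  - intros t0 iota m0 vs0 v0 He _; injection He; intros; subst.
    rewrite restrictG_all; [exact H | eapply sem_po_closed; eauto | reflexivity].
  - intros e' -> _; exists 0; reflexivity.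
Qed.

Lemma translate_refines t p : in_threads T t -> refines t (translate L I t p) p.
Proof.
  intro Ht; induction p as [v|m l|q IHq g IHg|q IHq|k v]; simpl.
  - apply refines_refl; intros r G e [_ ->] [].
  - destruct (lib_M L m) eqn:Hm; [apply refines_call; auto|].
    apply refines_refl; intros r G e [v' [iota [_ ->]]] ->; exact Hm.
  - apply refines_let; auto.
  - apply refines_loop; auto.
  - apply refines_refl; intros r G e [_ ->] [].
Qed.

End Translation.

Section Threads.
Variables (T : nat) (Gs Gs' : Tid -> PE) (fs : Tid -> Ev -> Ev).
Hypothesis Hclosed : forall t, in_threads T t -> po_closed (Gs t).
Hypothesis Hclosed' : forall t, in_threads T t -> po_closed (Gs' t).
Hypothesis Hthread : forall t e, in_threads T t -> pE (Gs t) e -> ev_thread e = t.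
Hypothesis Hthread' : forall t e, in_threads T t -> pE (Gs' t) e -> ev_thread e = t.
Hypothesis HA : forall t, in_threads T t -> wide_abstraction L I (Gs t) (Gs' t) (fs t).

Lemma abstraction_keeps_thread t x : in_threads T t -> pE (Gs t) x -> ev_thread (fs t x) = t.
Proof. intros Ht Hx; apply Hthread'; [exact Ht | apply (HA t Ht); exact Hx]. Qed.

Lemma parG_restrict t e' : in_threads T t -> ev_thread e' = t ->
  restrictG (parG T Gs) (fun x => pE (parG T Gs) x /\ fs (ev_thread x) x = e') =
  restrictG (Gs t) (fun x => pE (Gs t) x /\ fs t x = e').
Proof.
  intros Ht Hte'; apply restrictG_part.
  - intros x Hx E; apply (in_parG _ _ Hthread) in Hx as [Htx Hx].
    rewrite <- Hte', <- E, abstraction_keeps_thread by assumption; exact Hx.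
  - intros x Hx; rewrite (Hthread t x Ht Hx); split; [exists t; auto | tauto].
  - intros x y Hx Hy; rewrite (parG_po _ _ Hthread Hclosed), (Hthread t x Ht Hx); tauto.
Qed.

Lemma wide_abstraction_parG :
  wide_abstraction L I (parG T Gs) (parG T Gs') (fun x => fs (ev_thread x) x).
Proof.
  repeat split.
  - intros x Hx; apply (in_parG _ _ Hthread) in Hx as [Ht Hx].
    exists (ev_thread x); split; [exact Ht | apply (HA _ Ht); exact Hx].
  - intros e' [t [Ht He]]; destruct (proj1 (proj2 (HA t Ht)) e' He) as [x [Hx <-]].
    exists x; rewrite (Hthread t x Ht Hx); split; [exists t; auto | reflexivity].
  - intros x [t [Ht Hx]]; apply (HA t Ht); exact Hx.
  - intros x [t [Ht Hx]]; rewrite (Hthread t x Ht Hx); apply (HA t Ht); exact Hx.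
  - intros x y [t [Ht Hxy]]; destruct (Hclosed t Ht _ _ Hxy) as [Hx Hy].
    rewrite (Hthread t x Ht Hx), (Hthread t y Ht Hy).
    apply clos_refl_trans_mono with (ppo (Gs' t)); [intros a b Hab; exists t; auto|].
    apply (HA t Ht); exact Hxy.
  - intros e1 e2 He1 He2 H.
    apply (in_parG _ _ Hthread) in He1 as [Ht1 He1], He2 as [Ht2 He2].
    apply (parG_po _ _ Hthread' Hclosed') in H as [_ H].
    rewrite abstraction_keeps_thread in H by assumption.
    assert (E : ev_thread e2 = ev_thread e1).
    { rewrite <- (abstraction_keeps_thread _ e2 Ht2 He2).
      apply (Hthread' _ _ Ht1), (Hclosed' _ Ht1 _ _ H). }
    rewrite E in He2, H.
    apply (parG_po _ _ Hthread Hclosed); split; [exact Ht1 | apply (HA _ Ht1); assumption].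
  - intros t0 iota m vs v' [t [Ht He]] Hm.
    pose proof (Hthread' t _ Ht He) as E; change (t0 = t) in E; subst t0.
    rewrite (parG_restrict t) by auto; apply (HA t Ht); assumption.
Qed.

End Threads.

End Refinement.

Theorem mainTheorem1
  (Val Method Stamp : Type) (Loc : Val -> Prop) (to : Stamp -> Stamp -> Prop)
  (T : nat)
  (L : @Library Val Method Stamp Loc to)
  (Lam : @Library Val Method Stamp Loc to -> Prop)
  (I : Implementation Val Method)
  (ps : Tid -> SeqProg Val Method) (vs : Tid -> Val) (G : PlainExec Val Method) :
  (forall L1 L2, Lam L1 -> Lam L2 -> L1 <> L2 -> compatible L1 L2) ->
  (forall L1, Lam L1 -> compatible L L1) ->
  ~ Lam L ->
  well_defined_impl T L Lam I ->
  (forall t, in_threads T t ->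
     calls_only (fun m => methods_of Lam m \/ lib_M L m = true) (ps t)) ->
  csem T (translate_conc L I ps) vs G ->
  exists (G' : PlainExec Val Method) (f : Event Val Method -> Event Val Method),
    csem T ps vs G' /\ wide_abstraction L I G G' f.
Proof.
  intros _ HcompL _ Hwd _ [Gs [Hsem [_ ->]]].
  assert (Hthreads : forall t, in_threads T t -> exists Gf,
            sem t (ps t) (vs t, 0) (fst Gf) /\ wide_abstraction L I (Gs t) (fst Gf) (snd Gf)).
  { intros t Ht.
    destruct (translate_refines L I T Lam HcompL Hwd t (ps t) Ht _ _ (fun k => k)
                (fun _ _ E => E) (Hsem t Ht)) as [G' [f [HG' [HA _]]]].
    exists (G', f); auto. }
  destruct (choice_on _ _ _ _ (@empty_G Val Method, fun x => x) Hthreads) as [F HF].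
  assert (HS : forall t, in_threads T t -> sem t (ps t) (vs t, 0) (fst (F t)))
    by (intros t Ht; apply (HF t Ht)).
  exists (parG T (fun t => fst (F t))), (fun x => snd (F (ev_thread x)) x); split.
  - exists (fun t => fst (F t)); repeat split; [exact HS|].
    intros t t' Ht Ht' Hne e He He'; apply Hne.
    rewrite <- (sem_event_thread _ _ _ _ e (HS t Ht) He).
    exact (sem_event_thread _ _ _ _ e (HS t' Ht') He').
  - apply (wide_abstraction_parG L I T Gs (fun t => fst (F t)) (fun t => snd (F t))).
    + intros t Ht; exact (sem_po_closed _ _ _ _ (Hsem t Ht)).
    + intros t Ht; exact (sem_po_closed _ _ _ _ (HS t Ht)).
    + intros t e Ht; exact (sem_event_thread _ _ _ _ e (Hsem t Ht)).
    + intros t e Ht; exact (sem_event_thread _ _ _ _ e (HS t Ht)).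
    + intros t Ht; apply (HF t Ht).
Qed.
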